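(* Let $\mathcal{B}$ be a history-deterministic generalised coBüchi automaton recognising a language $L\subseteq\Sigma^\omega$. Let $\mathcal{A}_{\min}$ be a nice, safe minimal and safe centralised history-deterministic coBüchi automaton recognising $L$, with safe components having state sets $S_1,\dots,S_k$. Let $R_1,\dots,R_m$ be the distinct residuals of $L$, let $Q^{R_j}$ be the set of states of $\mathcal{A}_{\min}$ whose language (taken as initial state) is $R_j$, and $n_j=\max_{1\le i\le k}|S_i\cap Q^{R_j}|$. Then $\mathcal{B}$ has at least $n_1+n_2+\cdots+n_m$ states (that is, at least as many states as the automaton $\mathcal{A}_{\mathrm{gen}}$ obtained by taking $n_j$ copies of the state for each residual $R_j$).
   Context: An automaton is a tuple $(Q,\Sigma,q_{\mathrm{init}},\Delta,\Gamma,\mathrm{col},W)$ with finite state set, finite input alphabet $\Sigma$, initial state, transitions $\Delta\subseteq Q\times\Sigma\times Q$, output alphabet $\Gamma$, labelling $\mathrm{col}:\Delta\to\Gamma$, acceptance condition $W\subseteq\Gamma^\omega$. A run on $w=a_1a_2\cdots$ is a sequence $(q_0,a_1,q_1)(q_1,a_2,q_2)\cdots$ of transitions with $q_0=q_{\mathrm{init}}$, accepting if its label sequence is in $W$; $\mathcal{L}(\mathcal{A})$ is the set of words with an accepting run. With a finite colour set $C$ and $\Gamma=2^C$, generalised coBüchi means $W=\{x : \text{some } c\in C \text{ occurs in only finitely many letters of } x\}$; a coBüchi automaton is the case $C=\{1\}$, its coBüchi transitions being those labelled $\{1\}$. A resolver is a map $\sigma:\Sigma^+\to\Delta$ such that for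 every $w=a_0a_1\cdots$, $\sigma(a_0)\sigma(a_0a_1)\cdots$ is a run on $w$, accepting whenever $w\in\mathcal{L}(\mathcal{A})$; history-deterministic means a resolver exists. The residual of $L$ with respect to $u\in\Sigma^*$ is $u^{-1}L=\{w : uw\in L\}$. For a coBüchi automaton: $\mathcal{A}_{\mathrm{safe}}$ is obtained by deleting coBüchi transitions; a safe component is a strongly connected component of $\mathcal{A}_{\mathrm{safe}}$; the safe language of $q$ is the set of words with an infinite path from $q$ in $\mathcal{A}_{\mathrm{safe}}$; two states are equivalent if the automaton started from each recognises the same language. Semantically deterministic: $(q,a,p_1),(q,a,p_2)\in\Delta$ implies $p_1,p_2$ equivalent; normal form: transitions between different safe components are coBüchi transitions; safe deterministic: $\mathcal{A}_{\mathrm{safe}}$ deterministic; nice: all states reachable, semantically deterministic, normal form, safe deterministic. Safe centralised: equivalent states with inclusion-comparable safe languages lie in the same safe component; safe minimal: equivalent states with equal safe languages are equal. *)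

From Stdlib Require Import ClassicalDescription.
From mathcomp Require Import all_boot.

Set Implicit Arguments.
Unset Strict Implicit.
Unset Printing Implicit Defensive.

Definition word (Sigma : Type) := nat -> Sigma.

Definition cat_word (Sigma : Type) (u : seq Sigma) (w : word Sigma) : word Sigma :=
  fun i => if i < size u then nth (w 0) u i else w (i - size u).

Definition residual (Sigma : Type) (L : word Sigma -> Prop) (u : seq Sigma) :
  word Sigma -> Prop := fun w => L (cat_word u w).

Definition lang_eq (Sigma : Type) (L1 L2 : word Sigma -> Prop) : Prop :=
  forall w, L1 w <-> L2 w.

Definition pb (P : Prop) : bool :=
  if excluded_middle_informative P then true else false.

(** Automaton (Q, Sigma, q_init, Delta, Gamma, col, W); Delta is given by its
    characteristic function, col is given on all triples (only its values on
    transitions matter). *)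
Record automaton (Sigma : finType) (Gamma : Type) := Automaton {
  St : finType;
  init : St;
  trans : St -> Sigma -> St -> bool;
  col : St -> Sigma -> St -> Gamma;
  acc : (nat -> Gamma) -> Prop
}.
Arguments St {Sigma Gamma} a.
Arguments init {Sigma Gamma} a.
Arguments trans {Sigma Gamma} a _ _ _.
Arguments col {Sigma Gamma} a _ _ _.
Arguments acc {Sigma Gamma} a _.

Section Automata.
Variables (Sigma : finType) (Gamma : Type) (A : automaton Sigma Gamma).

Definition transition := (St A * Sigma * St A)%type.

Definition run_from (q : St A) (w : word Sigma) (t : nat -> transition) : Prop :=
  (t 0).1.1 = q /\
  forall i, [/\ trans A (t i).1.1 (t i).1.2 (t i).2,
                (t i).1.2 = w i &
                (t i.+1).1.1 = (t i).2].

Definition labels (t : nat -> transition) : nat -> Gamma :=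
  fun i => col A (t i).1.1 (t i).1.2 (t i).2.

Definition lang_from (q : St A) (w : word Sigma) : Prop :=
  exists t, run_from q w t /\ acc A (labels t).

Definition lang : word Sigma -> Prop := lang_from (init A).

(** Resolver sigma : Sigma^+ -> Delta (its value on the empty word is irrelevant). *)
Definition is_resolver (sigma : seq Sigma -> transition) : Prop :=
  forall w : word Sigma,
    run_from (init A) w (fun i => sigma (mkseq w i.+1)) /\
    (lang w -> acc A (labels (fun i => sigma (mkseq w i.+1)))).

Definition history_deterministic : Prop := exists sigma, is_resolver sigma.

Definition equivalent (p q : St A) : Prop := lang_eq (lang_from p) (lang_from q).

End Automata.
Arguments run_from {Sigma Gamma} A q w t.
Arguments labels {Sigma Gamma} A t _.
Arguments lang_from {Sigma Gamma} A q w.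
Arguments lang {Sigma Gamma} A w.
Arguments is_resolver {Sigma Gamma} A sigma.
Arguments history_deterministic {Sigma Gamma} A.
Arguments equivalent {Sigma Gamma} A p q.

Definition gen_coBuchi (C : finType) (x : nat -> {set C}) : Prop :=
  exists c : C, exists N, forall i, N <= i -> c \notin x i.

Definition is_gen_coBuchi (Sigma C : finType) (A : automaton Sigma {set C}) : Prop :=
  forall x, acc A x <-> gen_coBuchi x.

(** CoBuchi automata: generalised coBuchi with C = {1}, modelled by [unit]. *)
Definition is_coBuchi (Sigma : finType) (A : automaton Sigma {set unit}) : Prop :=
  is_gen_coBuchi A.

Section CoBuchi.
Variables (Sigma : finType) (A : automaton Sigma {set unit}).

Definition safe_tr (p : St A) (a : Sigma) (q : St A) : bool :=
  trans A p a q && (tt \notin col A p a q).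

Definition safe_edge : rel (St A) := fun p q => [exists a, safe_tr p a q].

Definition same_safe_comp (p q : St A) : bool :=
  connect safe_edge p q && connect safe_edge q p.

Definition safe_lang (q : St A) (w : word Sigma) : Prop :=
  exists r : nat -> St A, r 0 = q /\ forall i, safe_tr (r i) (w i) (r i.+1).

Definition any_edge : rel (St A) := fun p q => [exists a, trans A p a q].

Definition all_reachable : Prop := forall q, connect any_edge (init A) q.

Definition semantically_deterministic : Prop :=
  forall q a p1 p2, trans A q a p1 -> trans A q a p2 -> equivalent A p1 p2.

Definition normal_form : Prop :=
  forall p a q, trans A p a q -> ~~ same_safe_comp p q -> tt \in col A p a q.

Definition safe_deterministic : Prop :=
  forall p a q1 q2, safe_tr p a q1 -> safe_tr p a q2 -> q1 = q2.

Definition nice : Prop :=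
  [/\ all_reachable, semantically_deterministic, normal_form & safe_deterministic].

Definition lang_incl (L1 L2 : word Sigma -> Prop) : Prop := forall w, L1 w -> L2 w.

Definition safe_centralised : Prop :=
  forall p q, equivalent A p q ->
    (lang_incl (safe_lang p) (safe_lang q) \/ lang_incl (safe_lang q) (safe_lang p)) ->
    same_safe_comp p q.

Definition safe_minimal : Prop :=
  forall p q, equivalent A p q -> lang_eq (safe_lang p) (safe_lang q) -> p = q.

Definition QR (R : word Sigma -> Prop) : {set St A} :=
  [set q | pb (lang_eq (lang_from A q) R)].

(** n_R = max over safe components S of |S ∩ Q^R|; each safe component is
    the component of some state p. *)
Definition n_of (R : word Sigma -> Prop) : nat :=
  \max_(p : St A) #|[set q in QR R | same_safe_comp p q]|.

End CoBuchi.
Arguments safe_tr {Sigma} A p a q.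
Arguments safe_edge {Sigma} A p q.
Arguments same_safe_comp {Sigma} A p q.
Arguments safe_lang {Sigma} A q w.
Arguments nice {Sigma} A.
Arguments safe_centralised {Sigma} A.
Arguments safe_minimal {Sigma} A.
Arguments QR {Sigma} A R.
Arguments n_of {Sigma} A R.

(* Fix a safe component S of A_min with at least two states and a word v0 leading into it.
   Every word that stays safe in S after v0 is in L, so the resolver of B accepts it; hence,
   after some safe extension v of v0, some colour c of B is never visited by the resolver of B
   as long as the word stays safe in S (otherwise, forcing the colours in round robin yields
   a safe word that B rejects).
   A state r of S is matched with a state b of B when, for some y safe from the state of S
   after v, A_min reaches r and the resolver of B reaches b on v y. Matched states have the
   same language, and B can follow every safe transition of a matched state by a c-free
   transition. If the resolver of A_min could always be forced into a rejecting transition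
   along such moves, B would accept a word rejected by the resolver of A_min; so some
   configuration is rejection free, and from it the state of the resolver of A_min dominates,
   in the order "same language and larger safe language", every state matched with the
   current state of B. Safe centralisation and safe minimality let us synchronise the
   resolver with a matched state and steer it to any state q of S: q then becomes the
   largest state matched with some state b_q of B. So q |-> b_q is injective and preserves
   languages, and states of B serving distinct residuals are distinct. *)

From mathcomp Require Import all_boot zify.
From Stdlib Require ClassicalDescription.
From Stdlib Require Import ClassicalEpsilon FunctionalExtensionality Classical.

Set Implicit Arguments.
Unset Strict Implicit.
Unset Printing Implicit Defensive.

Lemma pbP (P : Prop) : reflect P (pb P).
Proof.
by rewrite /pb; case: (ClassicalDescription.excluded_middle_informative P) => H; constructor.
Qed.

Lemma dependent_choice (X : Type) (P : X -> Prop) (R : X -> X -> Prop) :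
  (forall x, P x -> exists2 y, P y & R x y) -> forall x0, P x0 ->
  exists f : nat -> X, f 0 = x0 /\ forall k, P (f k) /\ R (f k) (f k.+1).
Proof.
move=> HR x0 Px0.
have Hnext x : exists y, P x -> P y /\ R x y.
  case: (classic (P x)) => [/HR[y Py Rxy]|notPx]; first by exists y.
  by exists x.
pose next x := proj1_sig (constructive_indefinite_description _ (Hnext x)).
have nextP x : P x -> P (next x) /\ R x (next x).
  by rewrite /next; case: constructive_indefinite_description.
pose f := fix f k := if k is k'.+1 then next (f k') else x0.
have Pf k : P (f k) by elim: k => [|k IH] //=; case: (nextP _ IH).
by exists f; split=> // k; split; [|case: (nextP _ (Pf k))].
Qed.

Section InfinitelyOften.
Variables (X : Type) (Step Good : X -> X -> Prop) (Inv : X -> Prop).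

Fixpoint good_within (n : nat) (x : X) : Prop :=
  exists2 y, Step x y & Good x y \/ (if n is m.+1 then good_within m y else False).

Hypothesis Inv_step : forall x y, Inv x -> Step x y -> Inv y.
Hypothesis Inv_good : forall x, Inv x -> exists n, good_within n x.

Lemma good_within_next x n : Inv x -> good_within n x ->
  exists y m, [/\ Step x y, Inv y, good_within m y & Good x y \/ m < n].
Proof.
move=> Ix Hn; have [y Sxy Hy] : exists2 y, Step x y &
    Good x y \/ (if n is m.+1 then good_within m y else False) by case: n Hn.
have Iy := Inv_step Ix Sxy.
case: Hy => [Gxy|]; first by have [m Hm] := Inv_good Iy; exists y, m; split; auto.
by case: n {Hn} => [//|m] Hm; exists y, m; split; auto.
Qed.

Lemma good_infinitely_often x0 : Inv x0 ->
  exists f : nat -> X, [/\ f 0 = x0, forall k, Step (f k) (f k.+1) &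
    forall N, exists2 k, N <= k & Good (f k) (f k.+1)].
Proof.
move=> Ix0; have [n0 Hn0] := Inv_good Ix0.
have next (p : X * nat) : Inv p.1 /\ good_within p.2 p.1 ->
    exists2 q : X * nat, Inv q.1 /\ good_within q.2 q.1 &
      Step p.1 q.1 /\ (Good p.1 q.1 \/ q.2 < p.2).
  by case=> Ip /(good_within_next Ip) [y [m [Sy Iy Gy G]]]; exists (y, m).
have [f [f0 Hf]] := dependent_choice next (x0 := (x0, n0)) (conj Ix0 Hn0).
exists (fun k => (f k).1); split; first by rewrite f0.
  by move=> k; case: (Hf k) => _ [].
move=> N; apply: NNPP => NoGood.
have decr k : N <= k -> (f k.+1).2 < (f k).2.
  move=> Nk; case: (Hf k) => _ [_ [G|//]].
  by case: NoGood; exists k.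
have bound j : (f (N + j)).2 + j <= (f N).2.
  elim: j => [|j IH]; first by rewrite !addn0.
  by have := decr (N + j) (leq_addr _ _); rewrite [N + j.+1]addnS; lia.
by have := bound (f N).2.+1; lia.
Qed.

End InfinitelyOften.

Section Words.
Variable Sigma : Type.
Implicit Types (u v : seq Sigma) (w : word Sigma).

Lemma cat_word_lt u w i : i < size u -> cat_word u w i = nth (w 0) u i.
Proof. by rewrite /cat_word => ->. Qed.

Lemma cat_word_addl u w i : cat_word u w (size u + i) = w i.
Proof. by rewrite /cat_word ltnNge leq_addr /= addKn. Qed.

Lemma cat_word_nil w : cat_word [::] w = w.
Proof. by apply: functional_extensionality => i; rewrite /cat_word /= subn0. Qed.

Lemma cat_word_cons a u w i : cat_word (a :: u) w i.+1 = cat_word u w i.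
Proof. by rewrite /cat_word /= ltnS subSS. Qed.

Lemma cat_word_drop u w : (fun i => cat_word u w (i + size u)) = w.
Proof. by apply: functional_extensionality => i; rewrite addnC cat_word_addl. Qed.

Lemma cat_word_cat u v w : cat_word (u ++ v) w = cat_word u (cat_word v w).
Proof.
apply: functional_extensionality => i; rewrite /cat_word size_cat nth_cat.
case: (ltnP i (size u)) => Hu; first by rewrite ltn_addr //; apply: set_nth_default.
by rewrite ltn_subLR // subnDA; case: ltnP.
Qed.

Lemma mkseq_cat_word_take u w n : n <= size u -> mkseq (cat_word u w) n = take n u.
Proof.
elim: n => [|n IH] Hn; first by rewrite take0.
by rewrite mkseqS IH ?(ltnW Hn) // cat_word_lt // (take_nth (w 0)).
Qed.

Lemma mkseq_cat_word u w n : mkseq (cat_word u w) (size u + n) = u ++ mkseq w n.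
Proof.
elim: n => [|n IH]; first by rewrite addn0 mkseq_cat_word_take // take_size cats0.
by rewrite addnS mkseqS IH cat_word_addl mkseqS rcons_cat.
Qed.

Lemma mkseq_cat_word_size u w : mkseq (cat_word u w) (size u) = u.
Proof. by have := mkseq_cat_word u w 0; rewrite addn0 cats0. Qed.

Lemma take_mkseq (f : nat -> Sigma) n m : n <= m -> take n (mkseq f m) = mkseq f n.
Proof. by move=> nm; rewrite /mkseq -map_take take_iota (minn_idPl nm). Qed.

Lemma extends_trans (F : nat -> seq Sigma) :
  (forall k, exists e, F k.+1 = F k ++ e) ->
  forall k m, k <= m -> exists e, F m = F k ++ e.
Proof.
move=> ext k m /subnKC <-; elim: (m - k) => [|d [e IH]].
  by exists [::]; rewrite addn0 cats0.
by rewrite addnS; have [e' ->] := ext (k + d); exists (e ++ e'); rewrite IH catA.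
Qed.

Lemma limit_word (F : nat -> seq Sigma) (x0 : Sigma) :
  (forall k, exists e, F k.+1 = F k ++ e) -> (forall k, k <= size (F k)) ->
  exists w, forall k, F k = mkseq w (size (F k)).
Proof.
move=> ext large; exists (fun i => nth x0 (F i.+1) i) => k.
apply: (@eq_from_nth _ x0) => [|i ik]; first by rewrite size_mkseq.
rewrite nth_mkseq //.
have [ek Ek] := extends_trans ext (leq_maxl k i.+1).
have [ei Ei] := extends_trans ext (leq_maxr k i.+1).
have /(congr1 (nth x0 ^~ i)) : F k ++ ek = F i.+1 ++ ei by rewrite -Ek -Ei.
by rewrite /= !nth_cat ik (leq_trans (ltnSn i) (large _)).
Qed.

End Words.

Lemma residual_cat (Sigma : Type) (L : word Sigma -> Prop) u v :
  residual (residual L u) v = residual L (u ++ v).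
Proof. by apply: functional_extensionality => w; rewrite /residual cat_word_cat. Qed.

Section LangEq.
Variable Sigma : Type.
Implicit Types L : word Sigma -> Prop.

Lemma lang_eq_sym L1 L2 : lang_eq L1 L2 -> lang_eq L2 L1.
Proof. by move=> H w; split => /H. Qed.

Lemma lang_eq_trans L1 L2 L3 : lang_eq L1 L2 -> lang_eq L2 L3 -> lang_eq L1 L3.
Proof. by move=> H1 H2 w; split => [/H1/H2|/H2/H1]. Qed.

Lemma residual_lang_eq L1 L2 u : lang_eq L1 L2 -> lang_eq (residual L1 u) (residual L2 u).
Proof. by move=> H w; apply: H. Qed.

End LangEq.

Lemma gen_coBuchi_ext (C : finType) (x y : nat -> {set C}) :
  x =1 y -> gen_coBuchi x -> gen_coBuchi y.
Proof. by move=> E [c [N H]]; exists c, N => i Hi; rewrite -E; apply: H. Qed.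

Lemma gen_coBuchi_drop (C : finType) (x : nat -> {set C}) k :
  gen_coBuchi (fun i => x (i + k)) <-> gen_coBuchi x.
Proof.
split=> [[c [N H]]|[c [N H]]]; exists c.
  by exists (N + k) => i Hi; have := H (i - k); rewrite subnK; [apply; lia | lia].
by exists N => i Hi; apply: H; lia.
Qed.

Lemma nth_enum_mod_cofinal (T : finType) (x0 c : T) N :
  exists2 k, N <= k & nth x0 (enum T) (k %% #|T|) = c.
Proof.
have T_gt0 : 0 < #|T| by apply/card_gt0P; exists c.
have c_idx : index c (enum T) < #|T| by rewrite cardE index_mem mem_enum.
exists (index c (enum T) + N * #|T|); first by rewrite (leq_trans (leq_pmulr _ T_gt0)) ?leq_addl.
by rewrite addnC modnMDl modn_small // nth_index ?mem_enum.
Qed.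

Lemma sum_card_disjoint (I : Type) (T : finType) (x0 : I) (s : seq I) (F : I -> {set T}) :
  (forall i j, i < size s -> j < size s -> i != j ->
     [disjoint F (nth x0 s i) & F (nth x0 s j)]) ->
  \sum_(x <- s) #|F x| <= #|T|.
Proof.
move=> disj; rewrite (big_nth x0) big_mkord.
have <- : #|\bigcup_(i < size s) F (nth x0 s i)| = \sum_(i < size s) #|F (nth x0 s i)|.
  rewrite -sum1_card (partition_disjoint_bigcup) => [|i j ij].
    by apply: eq_bigr => i _; rewrite sum1_card.
  exact: disj.
exact: max_card.
Qed.

Section Reads.
Variables (Sigma : finType) (Gamma : Type) (X : automaton Sigma Gamma).

Inductive reads : St X -> seq Sigma -> St X -> Prop :=
| reads_nil p : reads p [::] p
| reads_cons p a q u r : trans X p a q -> reads q u r -> reads p (a :: u) r.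

Lemma reads_cat p u q v r : reads p u q -> reads q v r -> reads p (u ++ v) r.
Proof. by elim=> //= {}p a q' {}u r' Hpq _ IH /IH; apply: reads_cons. Qed.

Lemma reads_rcons p u q a r : reads p u q -> trans X q a r -> reads p (rcons u a) r.
Proof. by move=> Hu Ha; rewrite -cats1; exact: reads_cat Hu (reads_cons Ha (reads_nil r)). Qed.

Lemma reads1 p a q : reads p [:: a] q -> trans X p a q.
Proof. by move=> H; inversion H as [|p' a' q' u r Ht Hr]; inversion Hr; subst. Qed.

Lemma run_reads_prefix p w t : run_from X p w t -> forall k, reads p (mkseq w k) (t k).1.1.
Proof.
case=> t0 tS; elim=> [|k IH]; first by rewrite t0; constructor.
by rewrite mkseqS; apply: (reads_rcons IH); case: (tS k) => Ht <- ->.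
Qed.

Lemma run_from_drop p w t k : run_from X p w t ->
  run_from X (t k).1.1 (fun i => w (i + k)) (fun i => t (i + k)).
Proof. by case=> _ tS; split=> // i; apply: tS. Qed.

Lemma reads_run_cat p u q w t : reads p u q -> run_from X q w t ->
  exists t', run_from X p (cat_word u w) t' /\
             forall i, labels X t' (i + size u) = labels X t i.
Proof.
move=> Hu; elim: Hu w t => [{}p | {}p a q' {}u r Ht _ IH] w t Hr.
  by exists t; rewrite cat_word_nil; split => // i; rewrite addn0.
have [t' [[t'0 t'S] Hl]] := IH w t Hr.
exists (fun i => if i is j.+1 then t' j else (p, a, q')); split.
  by split => // [[|j]]; [split; rewrite ?t'0 | rewrite cat_word_cons; apply: t'S].
by move=> i; rewrite /= addnS -Hl.
Qed.

Section Resolver.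
Variable sigma : seq Sigma -> transition X.
Hypothesis sigmaP : is_resolver X sigma.

Definition res_state (h : seq Sigma) : St X := if h is [::] then init X else (sigma h).2.

Definition res_label (h : seq Sigma) : Gamma := col X (sigma h).1.1 (sigma h).1.2 (sigma h).2.

Lemma res_step h a : sigma (rcons h a) = (res_state h, a, res_state (rcons h a)) /\
  trans X (res_state h) a (res_state (rcons h a)).
Proof.
(* On [h a a ...] the resolver's transitions chain, so [sigma (rcons h a)] starts where
   [sigma h] ends. *)
pose w := cat_word (rcons h a) (fun _ => a).
have [[t0 tS] _] := sigmaP w.
have Eha : mkseq w (size h).+1 = rcons h a by rewrite -(size_rcons h a) mkseq_cat_word_size.
have Eh : mkseq w (size h) = h.
  by rewrite mkseq_cat_word_take ?size_rcons // -cats1 take_size_cat.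
have Ea : w (size h) = a by rewrite /w cat_word_lt ?size_rcons // nth_rcons ltnn eqxx.
have Esrc : (sigma (rcons h a)).1.1 = res_state h.
  case: (lastP h) Eha Eh => [|h' x]; first by move=> <-.
  rewrite size_rcons => Eha Eh; case: (tS (size h')) => _ _.
  by rewrite Eha Eh => ->; case: (h').
have Elast : res_state (rcons h a) = (sigma (rcons h a)).2 by case: (h).
case: (tS (size h)); rewrite Eha Ea Elast -Esrc => Ht Hl _.
by case: (sigma (rcons h a)) Ht Hl => [[p b] q] /= Ht <-.
Qed.

Lemma res_label_rcons h a : res_label (rcons h a) = col X (res_state h) a (res_state (rcons h a)).
Proof. by rewrite /res_label; case: (res_step h a) => ->. Qed.

Lemma reads_res_state h : reads (init X) h (res_state h).
Proof.
elim/last_ind: h => [|h a IH]; first by constructor.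
by apply: (reads_rcons IH); case: (res_step h a).
Qed.

End Resolver.
End Reads.

Arguments reads {Sigma Gamma} X _ _ _.
Arguments res_state {Sigma Gamma X} sigma h.
Arguments res_label {Sigma Gamma X} sigma h.

Section GenCoBuchi.
Variables (Sigma C : finType) (X : automaton Sigma {set C}).
Hypothesis X_gcb : is_gen_coBuchi X.

Lemma lang_from_cat p u q w : reads X p u q -> lang_from X q w ->
  lang_from X p (cat_word u w).
Proof.
move=> Hu [t [Hr /X_gcb Ha]]; have [t' [Hr' Hl]] := reads_run_cat Hu Hr.
exists t'; split => //; apply/X_gcb/(gen_coBuchi_drop _ (size u)).
exact: gen_coBuchi_ext Ha.
Qed.

Lemma lang_from_cat_inv p u w : lang_from X p (cat_word u w) ->
  exists2 q, reads X p u q & lang_from X q w.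
Proof.
move=> [t [Hr /X_gcb Ha]]; exists (t (size u)).1.1.
  by have := run_reads_prefix Hr (size u); rewrite mkseq_cat_word_size.
exists (fun i => t (i + size u)); split.
  by have := run_from_drop (size u) Hr; rewrite cat_word_drop.
exact/X_gcb/(gen_coBuchi_drop (labels X t)).
Qed.

Variable sigma : seq Sigma -> transition X.
Hypothesis sigmaP : is_resolver X sigma.

Lemma res_state_lang h : lang_eq (lang_from X (res_state sigma h)) (residual (lang X) h).
Proof.
move=> w; split; first exact/lang_from_cat/reads_res_state.
move=> Hw; have [Hr /(_ Hw) /X_gcb Ha] := sigmaP (cat_word h w).
set t := (fun i => _) in Hr Ha.
exists (fun i => t (i + size h)); split.
  have -> : res_state sigma h = (t (size h)).1.1.
    rewrite /t mkseqS mkseq_cat_word_size.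
    by case: (res_step sigmaP h (cat_word h w (size h))) => ->.
  by have := run_from_drop (size h) Hr; rewrite cat_word_drop.
exact/X_gcb/(gen_coBuchi_drop (labels X t)).
Qed.

Lemma res_label_accepting w : lang X w ->
  exists c N, forall i, N <= i -> c \notin res_label sigma (mkseq w i.+1).
Proof. by case: (sigmaP w) => _ Ha /Ha /X_gcb. Qed.

End GenCoBuchi.

Section SafeRuns.
Variables (Sigma : finType) (A : automaton Sigma {set unit}).
Hypothesis A_cb : is_coBuchi A.
Hypothesis A_semdet : semantically_deterministic A.
Hypothesis A_safedet : safe_deterministic A.

Lemma equivalent_step x1 x2 a y1 y2 : equivalent A x1 x2 ->
  trans A x1 a y1 -> trans A x2 a y2 -> equivalent A y1 y2.
Proof.
have incl x x' y y' : equivalent A x x' -> trans A x a y -> trans A x' a y' ->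
    forall w, lang_from A y w -> lang_from A y' w.
  move=> E T T' w /(lang_from_cat A_cb (reads_cons T (reads_nil y))) /E.
  by case/(lang_from_cat_inv A_cb) => q /reads1 Tq /(A_semdet Tq T').
move=> E T1 T2 w; split; [exact: incl E T1 T2 w | exact: incl (lang_eq_sym E) T2 T1 w].
Qed.

Lemma equivalent_reads x1 u y1 x2 y2 : equivalent A x1 x2 ->
  reads A x1 u y1 -> reads A x2 u y2 -> equivalent A y1 y2.
Proof.
move=> E H; elim: H x2 E => [p|p a q u' r T _ IH] x2 E H2; first by inversion H2; subst.
inversion H2 as [|p2 a2 q2 u2 r2 T2 H2']; subst.
exact: IH (equivalent_step E T T2) H2'.
Qed.

Lemma reads_lang p u q : reads A p u q ->
  lang_eq (lang_from A q) (residual (lang_from A p) u).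
Proof.
move=> Hu w; split; first exact: lang_from_cat.
case/(lang_from_cat_inv A_cb) => q' Hu'.
exact: (equivalent_reads (fun _ => iff_refl _) Hu' Hu w).1.
Qed.

Lemma safe_lang_accepted p z : safe_lang A p z -> lang_from A p z.
Proof.
case=> r [r0 Hr]; exists (fun i => (r i, z i, r i.+1)); split.
  by split => // i; case/andP: (Hr i).
by apply/A_cb; exists tt, 0 => i _; case/andP: (Hr i).
Qed.

Lemma connect_reads p q : connect (@any_edge _ A) p q -> exists u, reads A p u q.
Proof.
case/connectP => s + ->; elim: s p => [|r s IH] p /=; first by exists [::]; constructor.
by case/andP => /existsP[a Ha] /IH[u Hu]; exists (a :: u); apply: reads_cons Ha Hu.
Qed.

Definition safe_next p a : option (St A) := [pick q | safe_tr A p a q].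

Lemma safe_nextP p a q : safe_next p a = Some q <-> safe_tr A p a q.
Proof.
rewrite /safe_next; case: pickP => [q' Hq'|H]; split => //.
- by case=> <-.
- by move=> Hq; rewrite (A_safedet Hq' Hq).
- by rewrite H.
Qed.

Fixpoint safe_reach p (u : seq Sigma) : option (St A) :=
  if u is a :: u' then (if safe_next p a is Some q then safe_reach q u' else None)
  else Some p.

Lemma safe_reach_cat p u v : safe_reach p (u ++ v) = obind (safe_reach^~ v) (safe_reach p u).
Proof. by elim: u p => [//|a u IH] p /=; case: (safe_next p a). Qed.

Lemma safe_reach_rcons p u a : safe_reach p (rcons u a) = obind (safe_next^~ a) (safe_reach p u).
Proof. by rewrite -cats1 safe_reach_cat; case: (safe_reach p u) => //= q; case: safe_next. Qed.

Lemma safe_reach_catl p u v : safe_reach p (u ++ v) != None -> safe_reach p u != None.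
Proof. by rewrite safe_reach_cat; case: (safe_reach p u). Qed.

Lemma safe_reach_reads p u q : safe_reach p u = Some q -> reads A p u q.
Proof.
elim: u p => [|a u IH] p /=; first by case=> ->; constructor.
by case E: safe_next => [p1|//] /IH; move/safe_nextP: E => /andP[T _]; apply: reads_cons.
Qed.

Lemma safe_langE p z : safe_lang A p z <-> forall n, safe_reach p (mkseq z n) != None.
Proof.
split=> [[r [r0 Hr]]|H].
  suff E n : safe_reach p (mkseq z n) = Some (r n) by move=> n; rewrite E.
  elim: n => [|n IH]; first by rewrite r0.
  by rewrite mkseqS safe_reach_rcons IH /=; apply/safe_nextP.
exists (fun n => odflt p (safe_reach p (mkseq z n))); split => // n.
move: (H n.+1); rewrite mkseqS safe_reach_rcons; case: (safe_reach _ _) => [x|//] /=.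
by case E: safe_next => [y|//] _; apply/safe_nextP.
Qed.

Lemma safe_lang_cat p u q z : safe_reach p u = Some q ->
  safe_lang A p (cat_word u z) <-> safe_lang A q z.
Proof.
move=> Hu; rewrite !safe_langE; split=> H n.
  by move: (H (size u + n)); rewrite mkseq_cat_word safe_reach_cat Hu.
case: (leqP n (size u)) => Hn.
  by rewrite mkseq_cat_word_take // (@safe_reach_catl _ _ (drop n u)) // cat_take_drop Hu.
by rewrite -(subnKC (ltnW Hn)) mkseq_cat_word safe_reach_cat Hu; apply: H.
Qed.

End SafeRuns.

Arguments safe_next {Sigma} A p a.
Arguments safe_reach {Sigma} A p u.

Section SafeOrder.
Variables (Sigma : finType) (A : automaton Sigma {set unit}).
Hypothesis A_cb : is_coBuchi A.
Hypothesis A_semdet : semantically_deterministic A.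
Hypothesis A_safedet : safe_deterministic A.
Hypothesis A_normal : normal_form A.
Hypothesis A_safemin : safe_minimal A.

Definition safe_le (r t : St A) : Prop :=
  equivalent A r t /\ lang_incl (safe_lang A r) (safe_lang A t).

Lemma safe_le_refl r : safe_le r r.
Proof. by split. Qed.

Lemma safe_le_trans r s t : safe_le r s -> safe_le s t -> safe_le r t.
Proof. by case=> E1 I1 [E2 I2]; split; [exact: lang_eq_trans E1 E2 | move=> z /I1/I2]. Qed.

Lemma safe_le_anti r t : safe_le r t -> safe_le t r -> r = t.
Proof. by case=> E I1 [_ I2]; apply: A_safemin => // z; split; [apply: I1 | apply: I2]. Qed.

Lemma same_safe_comp_refl x : same_safe_comp A x x.
Proof. by rewrite /same_safe_comp connect0. Qed.

Lemma same_safe_comp_sym x y : same_safe_comp A x y -> same_safe_comp A y x.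
Proof. by case/andP => H1 H2; apply/andP. Qed.

Lemma same_safe_comp_trans x y z :
  same_safe_comp A x y -> same_safe_comp A y z -> same_safe_comp A x z.
Proof.
case/andP => H1 H2 /andP[H3 H4].
by apply/andP; split; [exact: connect_trans H1 H3 | exact: connect_trans H4 H2].
Qed.

Lemma safe_tr_same_comp x a y : safe_tr A x a y -> same_safe_comp A x y.
Proof. by case/andP => T N; apply/negPn/negP => /(A_normal T); apply/negP. Qed.

Lemma safe_reach_same_comp x u y : safe_reach A x u = Some y -> same_safe_comp A x y.
Proof.
elim: u x => [|a u IH] x /=; first by case=> <-; apply: same_safe_comp_refl.
case E: safe_next => [x1|//] /IH; apply: same_safe_comp_trans.
by move/(safe_nextP A_safedet): E => /safe_tr_same_comp.
Qed.

Lemma connect_safe_reach x y : connect (safe_edge A) x y -> exists u, safe_reach A x u = Some y.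
Proof.
case/connectP => p + ->; elim: p x => [|q p IH] x /=; first by exists [::].
case/andP => /existsP[a Ha] /IH[u Hu]; exists (a :: u) => /=.
by move/(safe_nextP A_safedet): Ha => ->.
Qed.

Lemma same_safe_comp_safe_reach x y : same_safe_comp A x y -> exists u, safe_reach A x u = Some y.
Proof. by case/andP => /connect_safe_reach. Qed.

Lemma nontrivial_comp_safe_lang x q : same_safe_comp A x q -> x != q ->
  exists z, safe_lang A x z.
Proof.
move=> Sxq xq.
have succ y : same_safe_comp A x y ->
    exists2 p : Sigma * St A, same_safe_comp A x p.2 & safe_tr A y p.1 p.2.
  move=> Sxy; have [t Syt yt] : exists2 t, same_safe_comp A y t & y != t.
    case: (eqVneq y x) => [->|yx]; first by exists q.
    by exists x => //; apply: same_safe_comp_sym.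
  case/andP: Syt => /connectP[p Hp Et] Cty.
  case: p Hp Et => [_ Et|y' p /= /andP[/existsP[a Ha] Hp] Et]; first by rewrite Et eqxx in yt.
  exists (a, y') => //=; apply: (same_safe_comp_trans Sxy); apply/andP; split.
    by apply/connect1/existsP; exists a.
  by apply: connect_trans Cty; apply/connectP; exists p.
have [[a0 _] _ _] := succ x (same_safe_comp_refl x).
have [f [f0 Hf]] := dependent_choice (fun p => succ p.2) (x0 := (a0, x)) (same_safe_comp_refl x).
by exists (fun k => (f k.+1).1), (fun k => (f k).2); split=> [|k]; [rewrite f0 | case: (Hf k)].
Qed.

Lemma safe_le_reach x x' u y : safe_le x x' -> safe_reach A x u = Some y ->
  (exists z, safe_lang A y z) -> exists2 y', safe_reach A x' u = Some y' & safe_le y y'.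
Proof.
move=> [E I] Hu [z Hz].
have /I := proj2 (safe_lang_cat A_safedet z Hu) Hz.
move/(safe_langE A_safedet)/(_ (size u)); rewrite mkseq_cat_word_size.
case Hu': safe_reach => [y'|//] _; exists y' => //; split.
  apply: lang_eq_trans (reads_lang A_cb A_semdet (safe_reach_reads A_safedet Hu)) _.
  apply: lang_eq_trans (residual_lang_eq u E) _.
  exact/lang_eq_sym/(reads_lang A_cb A_semdet (safe_reach_reads A_safedet Hu')).
by move=> z' /(safe_lang_cat A_safedet _ Hu)/I/(safe_lang_cat A_safedet _ Hu').
Qed.

Variables (C : finType) (L : word Sigma -> Prop) (B : automaton Sigma {set C}).
Hypotheses (B_gcb : is_gen_coBuchi B) (B_L : lang_eq (lang B) L) (A_L : lang_eq (lang A) L).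
Hypotheses (A_reach : all_reachable A) (A_central : safe_centralised A).
Variables (sB : seq Sigma -> transition B) (sA : seq Sigma -> transition A).
Hypotheses (sBP : is_resolver B sB) (sAP : is_resolver A sA).

Local Notation stB := (res_state sB).
Local Notation stA := (res_state sA).
Local Notation labB := (res_label sB).
Local Notation labA := (res_label sA).

Lemma stB_lang h : lang_eq (lang_from B (stB h)) (residual L h).
Proof. exact: lang_eq_trans (res_state_lang B_gcb sBP h) (residual_lang_eq h B_L). Qed.

Lemma reads_init_lang u p : reads A (init A) u p -> lang_eq (lang_from A p) (residual L u).
Proof.
by move/(reads_lang A_cb A_semdet) => H; apply: lang_eq_trans H (residual_lang_eq u A_L).
Qed.

Lemma stA_lang h : lang_eq (lang_from A (stA h)) (residual L h).
Proof. exact/reads_init_lang/(reads_res_state sAP). Qed.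

Lemma safe_lang_in_L u p z : reads A (init A) u p -> safe_lang A p z -> L (cat_word u z).
Proof. by move=> Hu /(safe_lang_accepted A_cb) /(lang_from_cat A_cb Hu) /A_L. Qed.

Definition QRB (R : word Sigma -> Prop) : {set St B} := [set b | pb (lang_eq (lang_from B b) R)].

Section Component.
Variables p0 q1 q2 : St A.
Hypotheses (q1_q2 : q1 != q2) (S_q1 : same_safe_comp A p0 q1) (S_q2 : same_safe_comp A p0 q2).
Local Notation S := (same_safe_comp A p0).

Lemma comp_safe_reach x u y : S x -> safe_reach A x u = Some y -> S y.
Proof. by move=> Sx /safe_reach_same_comp; apply: same_safe_comp_trans. Qed.

Lemma comp_connected x y : S x -> S y -> exists u, safe_reach A x u = Some y.
Proof.
move=> Sx Sy; apply: same_safe_comp_safe_reach.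
exact: same_safe_comp_trans (same_safe_comp_sym Sx) Sy.
Qed.

Lemma comp_safe_lang x : S x -> exists z, safe_lang A x z.
Proof.
move=> Sx; have comp_x q : S q -> same_safe_comp A x q.
  exact: same_safe_comp_trans (same_safe_comp_sym Sx).
case: (eqVneq x q1) => [Ex|xq1]; last exact: nontrivial_comp_safe_lang (comp_x _ S_q1) xq1.
by apply: nontrivial_comp_safe_lang (comp_x _ S_q2) _; rewrite Ex.
Qed.

Lemma safe_le_sync x x' u0 : S x -> safe_le x x' -> safe_reach A x u0 = Some x' ->
  exists u y, safe_reach A x u = Some y /\ safe_reach A x' u = Some y.
Proof.
(* [x, x u0, x u0 u0, ...] increases for [safe_le]; its up-sets shrink strictly until two
   consecutive terms coincide, by safe minimality. *)
move=> Sx le_xx' Hu0; have [n up_x] := ubnP #|[set y | pb (safe_le x y)]|.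
elim: n x x' u0 Sx le_xx' Hu0 up_x => // n IH x x' u0 Sx le_xx' Hu0; rewrite ltnS => up_x.
case: (eqVneq x x') => [<-|xx']; first by exists [::], x.
have Sx' := comp_safe_reach Sx Hu0.
have [x'' Hu0' le_x'x''] := safe_le_reach le_xx' Hu0 (comp_safe_lang Sx').
have up_lt : #|[set y | pb (safe_le x' y)]| < #|[set y | pb (safe_le x y)]|.
  apply: proper_card; apply/properP; split.
    by apply/subsetP => y; rewrite !inE => /pbP le_x'y; apply/pbP/(safe_le_trans le_xx').
  exists x; rewrite !inE; first exact/pbP/safe_le_refl.
  by apply/pbP => /(safe_le_anti le_xx') Ex; rewrite Ex eqxx in xx'.
have [u [y [H1 H2]]] := IH x' x'' u0 Sx' le_x'x'' Hu0' (leq_trans up_lt up_x).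
by exists (u0 ++ u), y; rewrite !safe_reach_cat Hu0 Hu0'.
Qed.

Section ColourAvoidance.
Variable v0 : seq Sigma.
Hypothesis v0_q1 : reads A (init A) v0 q1.

Definition forces_colours : Prop := forall y, safe_reach A q1 y != None -> forall c,
  exists e a, safe_reach A q1 (y ++ rcons e a) != None /\ c \in labB (v0 ++ y ++ rcons e a).

Lemma forced_word (c0 : C) : forces_colours ->
  exists2 z, safe_lang A q1 z &
    forall c N, exists2 i, N <= i & c \in labB (mkseq (cat_word v0 z) i.+1).
Proof.
move=> force; pose sched k := nth c0 (enum C) (k %% #|C|).
have next (x : nat * seq Sigma) : safe_reach A q1 x.2 != None ->
    exists2 x' : nat * seq Sigma, safe_reach A q1 x'.2 != None &
      x'.1 = x.1.+1 /\ exists e a, x'.2 = x.2 ++ rcons e a /\ sched x.1 \in labB (v0 ++ x'.2).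
  move=> Hx; have [e [a [He Hc]]] := force _ Hx (sched x.1).
  by exists (x.1.+1, x.2 ++ rcons e a) => //; split => //; exists e, a.
have [f [f0 Hf]] := dependent_choice next (x0 := (0, [::])) isT.
have idx k : (f k).1 = k by elim: k => [|k IH]; [rewrite f0 | case: (Hf k) => _ [-> _]; rewrite IH].
have grow k : exists e, (f k.+1).2 = (f k).2 ++ e.
  by case: (Hf k) => _ [_ [e [a [-> _]]]]; exists (rcons e a).
have large k : k <= size (f k).2.
  elim: k => [//|k IH]; case: (Hf k) => _ [_ [e [a [-> _]]]]; rewrite size_cat size_rcons; lia.
have [e0 [a0 _]] := force [::] isT c0.
have [z Ez] := limit_word a0 grow large.
exists z => [|c N].
  apply/(safe_langE A_safedet) => n; have := (Hf n).1.
  by rewrite Ez -(cat_take_drop n (mkseq _ _)) take_mkseq // => /safe_reach_catl.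
have [k Nk <-] := nth_enum_mod_cofinal c0 c N.
have pos : 0 < size (f k.+1).2 by apply: leq_trans (large k.+1).
exists (size v0 + (size (f k.+1).2).-1); first by have := large k.+1; lia.
case: (Hf k) => _ [_ [e [a [_]]]]; rewrite idx -addnS prednK //.
by rewrite mkseq_cat_word -Ez.
Qed.

Lemma colour_avoided : exists y c, safe_reach A q1 y != None /\ forall e a,
  safe_reach A q1 (y ++ rcons e a) != None -> c \notin labB (v0 ++ y ++ rcons e a).
Proof.
apply: NNPP => none.
have force : forces_colours.
  move=> y Hy c; apply: NNPP => H; apply: none; exists y, c; split => // e a He.
  by apply/negP => Hc; apply: H; exists e, a.
have accepted z : safe_lang A q1 z -> lang B (cat_word v0 z).
  by move/(safe_lang_in_L v0_q1)/B_L.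
have [z0 Hz0] := comp_safe_lang S_q1.
have [c0 _] := res_label_accepting B_gcb sBP (accepted _ Hz0).
have [z /accepted Hz every] := forced_word c0 force.
have [c [N HN]] := res_label_accepting B_gcb sBP Hz.
by have [i /HN/negP] := every c N.
Qed.

End ColourAvoidance.

Section RejectionFree.
Variables (v : seq Sigma) (qs : St A) (c : C).
Hypotheses (v_qs : reads A (init A) v qs) (S_qs : S qs).
Hypothesis c_avoided : forall e a, safe_reach A qs (rcons e a) != None ->
  c \notin labB (v ++ rcons e a).

Definition matched r b := exists y, safe_reach A qs y = Some r /\ stB (v ++ y) = b.

Lemma matched_lang r b : matched r b -> lang_eq (lang_from B b) (lang_from A r).
Proof.
case=> y [Hy <-]; apply: lang_eq_trans (stB_lang _) (lang_eq_sym _).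
exact/reads_init_lang/(reads_cat v_qs)/(safe_reach_reads A_safedet Hy).
Qed.

Lemma matched_comp r b : matched r b -> S r.
Proof. by case=> y [Hy _]; apply: comp_safe_reach S_qs Hy. Qed.

Lemma matched_step r b a r' : matched r b -> safe_tr A r a r' ->
  exists b', [/\ trans B b a b', c \notin col B b a b' & matched r' b'].
Proof.
case=> y [Hy <-] Ha; exists (stB (rcons (v ++ y) a)); split.
- by case: (res_step sBP (v ++ y) a).
- have Hy' : safe_reach A qs (rcons y a) = Some r'.
    by rewrite safe_reach_rcons Hy /=; apply/(safe_nextP A_safedet).
  by rewrite -(res_label_rcons sBP) rcons_cat; apply: c_avoided; rewrite Hy'.
- exists (rcons y a); rewrite safe_reach_rcons Hy /= rcons_cat; split => //.
  exact/(safe_nextP A_safedet).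
Qed.

Definition config := (seq Sigma * St B)%type.

Definition consistent (x : config) : Prop :=
  (exists r, matched r x.2) /\ lang_eq (lang_from B x.2) (residual L (v ++ x.1)).

Definition config_step (x x' : config) : Prop :=
  exists a, x'.1 = rcons x.1 a /\ exists r r', [/\ matched r x.2, safe_tr A r a r',
    trans B x.2 a x'.2, c \notin col B x.2 a x'.2 & matched r' x'.2].

Definition rejecting_step (x x' : config) : Prop := tt \in labA (v ++ x'.1).

Definition rejection_free (x : config) : Prop :=
  consistent x /\ forall n, ~ good_within config_step rejecting_step n x.

Lemma consistent_step x x' : consistent x -> config_step x x' -> consistent x'.
Proof.
case: x x' => [s b] [s' b'] [_ Lb] [a [/= -> [r [r' [Mr /andP[Ha _] _ _ Mr']]]]].
split; first by exists r'.
apply: lang_eq_trans (matched_lang Mr') _.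
apply: lang_eq_trans (reads_lang A_cb A_semdet (reads_cons Ha (reads_nil r'))) _.
rewrite -cats1 catA -residual_cat; apply: residual_lang_eq.
exact: lang_eq_trans (lang_eq_sym (matched_lang Mr)) Lb.
Qed.

Lemma config_chain_word (f : nat -> config) : (f 0).1 = [::] ->
  (forall k, config_step (f k) (f k.+1)) ->
  exists z, forall k, (f k).1 = mkseq z k /\
    trans B (f k).2 (z k) (f k.+1).2 /\ c \notin col B (f k).2 (z k) (f k.+1).2.
Proof.
move=> f0 steps.
have size_f k : size (f k).1 = k.
  by elim: k => [|k IH]; [rewrite f0 | case: (steps k) => a [-> _]; rewrite size_rcons IH].
have [a0 _] : exists a : Sigma, True by case: (steps 0) => a; exists a.
have grow k : exists e, (f k.+1).1 = (f k).1 ++ e.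
  by case: (steps k) => a [-> _]; exists [:: a]; rewrite cats1.
have [z Ez] := limit_word a0 grow (fun k => eq_leq (esym (size_f k))).
exists z => k; have Ek : (f k).1 = mkseq z k by rewrite Ez size_f.
split=> //; case: (steps k) => a [E [r [r' [_ _ T N _]]]].
suff /rcons_inj[<-] : rcons (mkseq z k) a = rcons (mkseq z k) (z k) by split.
by rewrite -Ek -E Ek -mkseqS Ez size_f.
Qed.

(* Along a chain with infinitely many rejecting steps, B accepts while the resolver of A rejects. *)
Lemma rejection_free_exists : exists x, rejection_free x.
Proof.
apply: NNPP => none.
have always_good x : consistent x -> exists n, good_within config_step rejecting_step n x.
  move=> Cx; apply: NNPP => H; apply: none; exists x; split => // n Hn.
  by apply: H; exists n.
have C0 : consistent ([::], stB v).
  split; first by exists qs, [::]; rewrite cats0.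
  by rewrite /= cats0; apply: stB_lang.
have [f [f0 steps rejecting]] := good_infinitely_often consistent_step always_good C0.
have [z Hz] := config_chain_word (congr1 fst f0) steps.
have B_z : lang_from B (stB v) z.
  exists (fun k => ((f k).2, z k, (f k.+1).2)); split.
    by split=> [|k]; [rewrite f0 | case: (Hz k) => _ []].
  by apply/B_gcb; exists c, 0 => k _; case: (Hz k) => _ [].
have /B_L/A_L/(res_label_accepting A_cb sAP) [[] [N HN]] :=
  lang_from_cat B_gcb (reads_res_state sBP v) B_z.
have [k Nk] := rejecting N; apply/negP.
rewrite /rejecting_step (proj1 (Hz k.+1)) -mkseq_cat_word addnS.
exact/HN/(leq_trans Nk (leq_addl _ _)).
Qed.

Lemma rejection_free_step x y : rejection_free x -> config_step x y ->
  rejection_free y /\ tt \notin labA (v ++ y.1).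
Proof.
move=> [Cx never] xy; split; first split.
- exact: consistent_step Cx xy.
- by move=> n Hn; apply: (never n.+1); exists y => //; right.
- by apply/negP => rej; apply: (never 0); exists y => //; left.
Qed.

Lemma rejection_free_follow s b r u r' : rejection_free (s, b) -> matched r b ->
  safe_reach A r u = Some r' -> exists b', [/\ rejection_free (s ++ u, b'), matched r' b' &
    safe_reach A (stA (v ++ s)) u = Some (stA (v ++ s ++ u))].
Proof.
elim: u s b r => [|a u IH] s b r RF Mr /=; first by case=> <-; exists b; rewrite !cats0.
case E: safe_next => [r1|//] Hu; have Ha := proj1 (safe_nextP A_safedet _ _ _) E.
have [b1 [T N M1]] := matched_step Mr Ha.
have step : config_step (s, b) (rcons s a, b1) by exists a; split => //; exists r, r1.
have [RF1 quiet] := rejection_free_step RF step.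
have [b' [RF' M' Hs]] := IH _ _ _ RF1 M1 Hu.
exists b'; rewrite -cat_rcons; split => //.
have -> // : safe_next A (stA (v ++ s)) a = Some (stA (v ++ rcons s a)).
apply/(safe_nextP A_safedet); rewrite -rcons_cat; apply/andP; split.
  by case: (res_step sAP (v ++ s) a).
by rewrite -(res_label_rcons sAP) rcons_cat.
Qed.

Lemma rejection_free_safe_le s b r : rejection_free (s, b) -> matched r b ->
  safe_le r (stA (v ++ s)).
Proof.
move=> RF Mr; have [[_ Lb] _] := RF; split.
  apply: lang_eq_trans (lang_eq_sym (matched_lang Mr)) _.
  exact: lang_eq_trans Lb (lang_eq_sym (stA_lang _)).
move=> z /(safe_langE A_safedet) Hz; apply/(safe_langE A_safedet) => n.
case E: safe_reach (Hz n) => [r'|//] _.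
by have [b' [_ _ ->]] := rejection_free_follow RF Mr E.
Qed.

Definition represents q b : Prop :=
  exists s, [/\ rejection_free (s, b), matched q b & stA (v ++ s) = q].

(* Safe centralisation puts the resolver's state into S, where it can be synchronised with a
   matched state. *)
Lemma comp_represented q : S q -> exists b, represents q b.
Proof.
move=> Sq; have [[s b] RF] := rejection_free_exists.
have [[[r Mr] _] _] := RF; have Sr := matched_comp Mr.
have le_rt := rejection_free_safe_le RF Mr.
have St : S (stA (v ++ s)).
  exact: same_safe_comp_trans Sr (A_central le_rt.1 (or_introl le_rt.2)).
have [u0 Hu0] := comp_connected Sr St.
have [u [y [Hry Hty]]] := safe_le_sync Sr le_rt Hu0.
have [u' Hu'] := comp_connected (comp_safe_reach Sr Hry) Sq.
have Hr : safe_reach A r (u ++ u') = Some q by rewrite safe_reach_cat Hry.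
have [b' [RF' Mq]] := rejection_free_follow RF Mr Hr.
rewrite safe_reach_cat Hty /= Hu' => -[Eq].
by exists b', (s ++ (u ++ u')).
Qed.

Lemma represents_inj q q' b : represents q b -> represents q' b -> q = q'.
Proof.
case=> s [RF M Eq] [s' [RF' M' Eq']]; apply: safe_le_anti.
  by rewrite -Eq'; apply: rejection_free_safe_le RF' M.
by rewrite -Eq; apply: rejection_free_safe_le RF M'.
Qed.

Lemma represents_lang q b : represents q b -> lang_eq (lang_from B b) (lang_from A q).
Proof. by case=> s [_ /matched_lang]. Qed.

End RejectionFree.

Lemma comp_card_le_QRB R : #|[set q in QR A R | S q]| <= #|QRB R|.
Proof.
have [v0 v0_q1] := connect_reads (A_reach q1).
have [y [c [Hy avoided]]] := colour_avoided v0_q1.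
case Eqs: safe_reach Hy => [qs|//] _.
have v_qs : reads A (init A) (v0 ++ y) qs.
  exact: reads_cat v0_q1 (safe_reach_reads A_safedet Eqs).
have S_qs : S qs := comp_safe_reach S_q1 Eqs.
have c_avoided e a : safe_reach A qs (rcons e a) != None ->
    c \notin labB ((v0 ++ y) ++ rcons e a).
  by move=> H; rewrite -catA; apply: avoided; rewrite safe_reach_cat Eqs.
pose rep := represents (v0 ++ y) qs c.
pose f q := odflt (init B) [pick b | pb (rep q b)].
have repf q : S q -> rep q (f q).
  move=> Sq; have [b Hb] := comp_represented v_qs S_qs c_avoided Sq.
  rewrite /f; case: pickP => [b' /pbP //|none].
  by move: (none b); rewrite (introT (pbP _) Hb).
rewrite -(@card_in_imset _ _ f) => [|q q'].
  apply: subset_leq_card; apply/subsetP => _ /imsetP[q + ->].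
  rewrite !inE => /andP[/pbP qR Sq]; apply/pbP.
  exact: lang_eq_trans (represents_lang v_qs (repf q Sq)) qR.
rewrite !inE => /andP[_ Sq] /andP[_ Sq'] E.
by apply: (represents_inj v_qs c_avoided (repf q Sq)); rewrite E; apply: repf.
Qed.

End Component.

Lemma n_of_le_QRB R : n_of A R <= #|QRB R|.
Proof.
apply/bigmax_leqP => p0 _.
set SR := [set q in QR A R | same_safe_comp A p0 q].
have [->|[q Hq]] := set_0Vmem SR; first by rewrite cards0.
case: (leqP #|SR| 1) => [small|/card_gt1P[q1 [q2 [Hq1 Hq2 q12]]]].
  apply: leq_trans small _; apply/card_gt0P.
  have [u Hu] := connect_reads (A_reach q); exists (stB u); rewrite inE; apply/pbP.
  move: Hq; rewrite !inE => /andP[/pbP qR _].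
  exact: lang_eq_trans (stB_lang u) (lang_eq_trans (lang_eq_sym (reads_init_lang Hu)) qR).
move: Hq1 Hq2; rewrite !inE => /andP[_ S1] /andP[_ S2].
exact: comp_card_le_QRB q12 S1 S2 R.
Qed.

Lemma QRB_disjoint R1 R2 : ~ lang_eq R1 R2 -> [disjoint QRB R1 & QRB R2].
Proof.
move=> R12; apply/pred0P => b /=; rewrite !inE; apply/negP => /andP[/pbP b1 /pbP b2].
exact/R12/(lang_eq_trans (lang_eq_sym b1) b2).
Qed.

End SafeOrder.

Theorem proposition24 (Sigma C : finType) (L : word Sigma -> Prop)
    (B : automaton Sigma {set C}) (Amin : automaton Sigma {set unit}) :
  is_gen_coBuchi B -> history_deterministic B -> lang_eq (lang B) L ->
  is_coBuchi Amin -> history_deterministic Amin -> lang_eq (lang Amin) L ->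
  nice Amin -> safe_minimal Amin -> safe_centralised Amin ->
  forall us : seq (seq Sigma),
    (forall i j, i < size us -> j < size us -> i != j ->
       ~ lang_eq (residual L (nth [::] us i)) (residual L (nth [::] us j))) ->
    \sum_(u <- us) n_of Amin (residual L u) <= #|St B|.
Proof.
move=> B_gcb [sB sBP] B_L A_cb [sA sAP] A_L [A_reach A_semdet A_normal A_safedet].
move=> A_safemin A_central us distinct.
pose QRB_of u := QRB B (residual L u).
apply: (@leq_trans (\sum_(u <- us) #|QRB_of u|)).
  by apply: leq_sum => u _; apply: n_of_le_QRB.
apply: (@sum_card_disjoint _ _ [::] us QRB_of) => i j ius jus ij.
exact/QRB_disjoint/distinct.
Qed.
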